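(* Let $V$ be an $N$-dimensional vector space over $\mathbb{F}_q$, $\mathcal{F}\subset V$ a spanning family with extended family $\overline{\mathcal{F}}$. Let $W=\bigcap_{j=1}^{N-w}H_j$ where each $H_j$ is a hyperplane generated by vectors in $\mathcal{F}$, and suppose $\dim W=w$. Then there exist $f_1,\dots,f_w\in\overline{\mathcal{F}}$ with $W=\langle f_1,\dots,f_w\rangle$.
   Context: A spanning family is a set $\mathcal{F}$ of pairwise linearly independent nonzero vectors with $\langle\mathcal{F}\rangle=V$. A hyperplane generated by vectors in $\mathcal{F}$ is the span of $N-1$ linearly independent vectors of $\mathcal{F}$. The extended family $\overline{\mathcal{F}}$ is the set of vectors $v\in V$ (one representative per $1$-dimensional subspace) such that $\langle v\rangle$ is an intersection of hyperplanes generated by vectors in $\mathcal{F}$. *)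

From HB Require Import structures.
From mathcomp Require Import all_boot all_order all_algebra.
Set Implicit Arguments. Unset Strict Implicit. Unset Printing Implicit Defensive.
Import GRing.Theory.
Local Open Scope ring_scope.
Local Open Scope vspace_scope.

(* V = F_q^N is modelled as 'rV[F]_N for a finite field F (q = #|F|). *)

Definition spanning_family (F : finFieldType) (N : nat)
    (fam : {set 'rV[F]_N}) : Prop :=
  [/\ forall u, u \in fam -> u != 0%R,
      forall u v, u \in fam -> v \in fam -> u != v -> free [:: u; v]
    & <<enum fam>>%VS = fullv].

Definition gen_hyperplane (F : finFieldType) (N : nat)
    (fam : {set 'rV[F]_N}) (H : {vspace 'rV[F]_N}) : Prop :=
  exists s : seq 'rV[F]_N,
    [/\ {subset s <= fam}, size s = N.-1, free s & H = <<s>>%VS].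

(* v belongs to the extended family (up to the choice of a representative
   of its line): <v> is an intersection of hyperplanes generated by fam. *)
Definition in_extended_family (F : finFieldType) (N : nat)
    (fam : {set 'rV[F]_N}) (v : 'rV[F]_N) : Prop :=
  v != 0%R /\
  exists Hs : seq {vspace 'rV[F]_N},
    (forall H, H \in Hs -> gen_hyperplane fam H) /\
    <[v]>%VS = (\bigcap_(H <- Hs) H)%VS.

From HB Require Import structures.
From mathcomp Require Import all_boot all_order all_algebra.
From mathcomp Require Import zify.
Import GRing.Theory.
Local Open Scope ring_scope.
Set Implicit Arguments. Unset Strict Implicit.

(* Induction on dim W. A line that is an intersection of generated hyperplanes
   is itself in the extended family. If dim W >= 2, pick u1 in W and a
   generated hyperplane H1 missing u1 (greedily extend a free subfamily of the
   spanning family while avoiding u1), then u2 in H1 :&: W and a generated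
   hyperplane H2 missing u2. Both H1 :&: W and H2 :&: W are intersections of
   generated hyperplanes of dimension dim W - 1, hence spanned by extended
   vectors by induction; as u2 witnesses, some spanning vector v of H1 :&: W
   lies outside H2, and v together with the spanning vectors of H2 :&: W
   spans W. *)

Section VectorSpaceFacts.

Variables (K : fieldType) (vT : vectType K).
Implicit Types (U W : {vspace vT}) (s t : seq vT).

Lemma span_cons_exchange (u x : vT) t :
  u \in <<x :: t>>%VS -> u \notin <<t>>%VS -> x \in <<u :: t>>%VS.
Proof.
rewrite !span_cons => /memv_addP [_ /vlineP [c ->] [z zt def_u]] uNt.
have [c0 | cn0] := eqVneq c 0; first by rewrite def_u c0 scale0r add0r zt in uNt.
have -> : x = c^-1 *: u - c^-1 *: z.
  by rewrite def_u scalerDr addrK scalerA mulVf // scale1r.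
by apply: memv_add; [apply/rpredZ/memv_line | rewrite rpredN rpredZ].
Qed.

Lemma span_subvPn s U :
  ~~ (<<s>> <= U)%VS -> exists2 x, x \in s & x \notin U.
Proof. by move=> sNU; apply/allPn; apply: contra sNU => /allP/span_subvP. Qed.

Lemma exists_free_avoiding s (u : vT) k :
  <<s>>%VS = fullv -> u != 0 -> (k < \dim {:vT})%N ->
  exists t, [/\ {subset t <= s}, size t = k, free t & u \notin <<t>>%VS].
Proof.
move=> span_s u0; elim: k => [|k IHk] lt_k_dim.
  by exists [::]; rewrite nil_free span_nil memv0.
have [t [ts size_t free_t uNt]] := IHk (ltnW lt_k_dim).
have /span_subvPn [x xs xNut] : ~~ (<<s>> <= <<u :: t>>)%VS.
  rewrite span_s; apply: contraTN lt_k_dim => /dimvS le_dim.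
  by rewrite -leqNgt (leq_trans le_dim) // (leq_trans (dim_span _)) /= ?size_t.
have tS : (<<t>> <= <<u :: t>>)%VS by rewrite span_cons addvSr.
exists (x :: t); split.
- by move=> y /predU1P [-> | /ts].
- by rewrite /= size_t.
- by rewrite free_cons free_t andbT; apply: contra xNut; apply: (subvP tS).
- by apply: contra xNut => uxt; apply: span_cons_exchange.
Qed.

Lemma dim_capv_hyperplane U W :
  \dim U = (\dim {:vT}).-1 -> ~~ (W <= U)%VS -> \dim (U :&: W) = (\dim W).-1.
Proof.
move=> dimU WnU.
have lt_U_UW : (\dim U < \dim (U + W))%N.
  by rewrite (ltn_leqif (dimv_leqif_sup (addvSl U W))) subv_add subvv.
have := dimvS (subvf (U + W)); have := dimv_sum_cap U W; rewrite dimU in lt_U_UW *.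
lia.
Qed.

Lemma addv_line_hyperplane U W (v : vT) :
  (U <= W)%VS -> v \in W -> v \notin U -> \dim U = (\dim W).-1 ->
  (<[v]> + U)%VS = W.
Proof.
move=> UW vW vNU dimU; apply/eqP; rewrite eqEdim subv_add -memvE vW UW /=.
have : (\dim U < \dim (<[v]> + U))%N.
  by rewrite (ltn_leqif (dimv_leqif_sup (addvSr _ _))) subv_add subvv andbT -memvE.
by rewrite dimU; case: (\dim W).
Qed.

End VectorSpaceFacts.

Lemma dim_rV (F : fieldType) (N : nat) : \dim (fullv : {vspace 'rV[F]_N}) = N.
Proof. by rewrite dimvf /dim /= mul1n. Qed.

Section ExtendedFamily.

Variables (F : finFieldType) (N : nat) (fam : {set 'rV[F]_N}).
Hypothesis fam_spanning : spanning_family fam.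

Lemma gen_hyperplane_dim (H : {vspace 'rV[F]_N}) :
  gen_hyperplane fam H -> \dim H = N.-1.
Proof. by case=> s [_ <- /eqP free_s ->]. Qed.

Lemma exists_gen_hyperplane_notin (u : 'rV[F]_N) :
  u != 0 -> exists2 H, gen_hyperplane fam H & u \notin H.
Proof.
case: fam_spanning => _ _ span_fam u0.
have lt_N : ((\dim {:'rV[F]_N}).-1 < \dim {:'rV[F]_N})%N.
  rewrite ltn_predL lt0n dimv_eq0; apply: contraNneq u0 => full0.
  by rewrite -memv0 -full0 memvf.
have [s [sfam size_s free_s uNs]] := exists_free_avoiding span_fam u0 lt_N.
rewrite dim_rV in size_s.
by exists <<s>>%VS => //; exists s; split=> // x /sfam; rewrite mem_enum.
Qed.

Lemma exists_gen_hyperplane_sections (W : {vspace 'rV[F]_N}) :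
  (1 < \dim W)%N ->
  exists H1 H2, [/\ gen_hyperplane fam H1, gen_hyperplane fam H2,
    \dim (H1 :&: W) = (\dim W).-1, \dim (H2 :&: W) = (\dim W).-1
    & ~~ (H1 :&: W <= H2)%VS].
Proof.
move=> gt1_dimW.
have section_dim H (u : 'rV[F]_N) :
    gen_hyperplane fam H -> u \in W -> u \notin H -> \dim (H :&: W) = (\dim W).-1.
  move=> /gen_hyperplane_dim dimH uW uNH; apply: dim_capv_hyperplane.
    by rewrite dimH dim_rV.
  by apply: contra uNH => /subvP; apply.
have u1_0 : vpick W != 0 by rewrite vpick0 -dimv_eq0 -lt0n ltnW.
have [H1 genH1 u1NH1] := exists_gen_hyperplane_notin u1_0.
have dimH1W := section_dim _ _ genH1 (memv_pick W) u1NH1.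
have u2_0 : vpick (H1 :&: W) != 0.
  by rewrite vpick0 -dimv_eq0 dimH1W -lt0n -subn1 subn_gt0.
have [H2 genH2 u2NH2] := exists_gen_hyperplane_notin u2_0.
have /memv_capP [_ u2W] := memv_pick (H1 :&: W)%VS.
exists H1, H2; split; rewrite ?(section_dim _ _ genH2 u2W u2NH2) //.
by apply: contra u2NH2 => /subvP; apply; apply: memv_pick.
Qed.

Lemma bigcapv_gen_hyperplanes_extended n (Hs : seq {vspace 'rV[F]_N}) :
  {in Hs, forall H, gen_hyperplane fam H} ->
  \dim (\bigcap_(H <- Hs) H)%VS = n ->
  exists s, [/\ size s = n, {in s, forall v, in_extended_family fam v}
            & (\bigcap_(H <- Hs) H)%VS = <<s>>%VS].
Proof.
elim: n Hs => [|n IHn] Hs genHs; set W := (\bigcap_(H <- Hs) H)%VS => dimW.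
  by exists [::]; rewrite span_nil; split=> //; apply/eqP; rewrite -dimv_eq0 dimW.
have pickW0 : vpick W != 0 by rewrite vpick0 -dimv_eq0 dimW.
case: n IHn dimW => [|n] IHn dimW.
  have lineW : <[vpick W]>%VS = W.
    by apply/eqP; rewrite eqEdim -memvE memv_pick dim_vline pickW0 dimW.
  exists [:: vpick W]; rewrite span_seq1; split=> // _ /predU1P [-> | //].
  by split=> //; exists Hs.
have gt1_dimW : (1 < \dim W)%N by rewrite dimW.
have [H1 [H2 [genH1 genH2 dimH1W dimH2W H1WnH2]]] :=
  exists_gen_hyperplane_sections gt1_dimW.
rewrite dimW /= in dimH1W dimH2W.
have section_extended H : gen_hyperplane fam H -> \dim (H :&: W) = n.+1 ->
    exists s, [/\ size s = n.+1, {in s, forall v, in_extended_family fam v}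
              & (H :&: W)%VS = <<s>>%VS].
  have -> : (H :&: W)%VS = (\bigcap_(H' <- H :: Hs) H')%VS by rewrite big_cons.
  by move=> genH; apply: IHn => H' /predU1P [-> | /genHs].
have [s1 [_ ext_s1 span_s1]] := section_extended H1 genH1 dimH1W.
have [s2 [size_s2 ext_s2 span_s2]] := section_extended H2 genH2 dimH2W.
have /span_subvPn [v vs1 vNH2] : ~~ (<<s1>> <= H2)%VS.
  by apply: contra H1WnH2; rewrite span_s1.
have /memv_capP [_ vW] : v \in (H1 :&: W)%VS by rewrite span_s1 memv_span.
exists (v :: s2); split; first by rewrite /= size_s2.
  by move=> x /predU1P [-> | /ext_s2]; [apply: ext_s1 |].
rewrite span_cons -span_s2; apply/esym/addv_line_hyperplane;
  rewrite ?capvSr ?dimH2W ?dimW //.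
by apply: contra vNH2 => /memv_capP [].
Qed.

End ExtendedFamily.

Theorem proposition6p6 (F : finFieldType) (N w : nat)
    (fam : {set 'rV[F]_N}) (H : 'I_(N - w) -> {vspace 'rV[F]_N}) :
  spanning_family fam ->
  (forall j, gen_hyperplane fam (H j)) ->
  \dim (\bigcap_(j < N - w) H j)%VS = w ->
  exists f : 'I_w -> 'rV[F]_N,
    (forall i, in_extended_family fam (f i)) /\
    (\bigcap_(j < N - w) H j)%VS = <<[seq f i | i : 'I_w]>>%VS.
Proof.
move=> fam_spanning genH dimW.
set Hs := [seq H j | j <- index_enum 'I_(N - w)].
have capE : (\bigcap_(j < N - w) H j)%VS = (\bigcap_(K <- Hs) K)%VS by rewrite big_map.
have genHs : {in Hs, forall K, gen_hyperplane fam K} by move=> K /mapP [j _ ->].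
rewrite capE in dimW *.
have [s [size_s ext_s ->]] := bigcapv_gen_hyperplanes_extended fam_spanning genHs dimW.
exists (nth 0 s); split=> [i | ].
  by apply: ext_s; rewrite mem_nth ?size_s.
by congr <<_>>%VS; rewrite -[LHS](mkseq_nth 0) size_s /mkseq -val_enum_ord -map_comp.
Qed.
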